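(* Let $\mathcal{K}$ be a statistical $\mathcal{ALC}$ knowledge base and $C, D$ arbitrary $\mathcal{ALC}$ concepts. Suppose there exist $\mathcal{I}_0, \mathcal{I}_1 \in \mathrm{Mod}(\mathcal{K})$ with $[D]^{\mathcal{I}_0} > 0$, $[D]^{\mathcal{I}_1} > 0$ and $$r_0 = \frac{[C \sqcap D]^{\mathcal{I}_0}}{[D]^{\mathcal{I}_0}} < \frac{[C \sqcap D]^{\mathcal{I}_1}}{[D]^{\mathcal{I}_1}} = r_1 .$$ Then there exists $\mathcal{I}_{0.5} \in \mathrm{Mod}(\mathcal{K})$ with $[D]^{\mathcal{I}_{0.5}} > 0$ and $\frac{[C \sqcap D]^{\mathcal{I}_{0.5}}}{[D]^{\mathcal{I}_{0.5}}} = \frac{r_0 + r_1}{2}$.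
   Context: $\mathcal{ALC}$ concepts over disjoint sets $N_C$, $N_R$: $C ::= \top \mid A \mid \neg C \mid C \sqcap C \mid \exists r.C$, standard semantics. Interpretations $\mathcal{I} = (\Delta^{\mathcal{I}}, \cdot^{\mathcal{I}})$ have non-empty finite domain; $[X]^{\mathcal{I}} := |X^{\mathcal{I}}|$. A conditional is $(C \mid D)[\ell,u]$ with concepts $C,D$ and rationals $0 \le \ell \le u \le 1$; $\mathcal{I} \models (C \mid D)[\ell,u]$ iff $[D]^{\mathcal{I}} = 0$ or $[C \sqcap D]^{\mathcal{I}}/[D]^{\mathcal{I}} \in [\ell,u]$. A statistical $\mathcal{ALC}$ knowledge base $\mathcal{K}$ is a finite set of conditionals; $\mathrm{Mod}(\mathcal{K})$ is the set of finite interpretations satisfying all of them. *)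

From HB Require Import structures.
From mathcomp Require Import all_boot all_order all_algebra.
From Stdlib Require Lists.List.
Unset Printing Implicit Defensive.
Import Order.TTheory GRing.Theory Num.Theory.

(* ALC concepts over concept names NC and role names NR (distinct types,
   hence disjoint). *)
Inductive concept (NC NR : Type) : Type :=
  | CTop : concept NC NR
  | CAtom : NC -> concept NC NR
  | CNeg : concept NC NR -> concept NC NR
  | CAnd : concept NC NR -> concept NC NR -> concept NC NR
  | CEx : NR -> concept NC NR -> concept NC NR.
Arguments CTop {NC NR}.
Arguments CAtom {NC NR}.
Arguments CNeg {NC NR}.
Arguments CAnd {NC NR}.
Arguments CEx {NC NR}.

Record interp (NC NR : Type) := Interp {
  dom : finType;
  dom_nonempty : 0 < #|dom|;
  cint : NC -> pred dom;
  rint : NR -> rel dom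
}.

Fixpoint csem (NC NR : Type) (I : interp NC NR) (C : concept NC NR) (x : dom NC NR I) : bool :=
  match C with
  | CTop => true
  | CAtom A => cint NC NR I A x
  | CNeg C' => ~~ csem NC NR I C' x
  | CAnd C1 C2 => csem NC NR I C1 x && csem NC NR I C2 x
  | CEx r C' => [exists y, rint NC NR I r x y && csem NC NR I C' y]
  end.
Arguments csem {NC NR} I C x.
Arguments dom {NC NR}.
Arguments cint {NC NR}.
Arguments rint {NC NR}.

Definition card_c {NC NR : Type} (I : interp NC NR) (C : concept NC NR) : nat :=
  #|[pred x | csem I C x]|.

Definition cratio {NC NR : Type} (I : interp NC NR) (C D : concept NC NR) : rat :=
  ((card_c I (CAnd C D))%:R / (card_c I D)%:R)%R.

Record conditional (NC NR : Type) := Cond {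
  ccon : concept NC NR;
  cprem : concept NC NR;
  clow : rat;
  cupp : rat
}.
Arguments ccon {NC NR}.
Arguments cprem {NC NR}.
Arguments clow {NC NR}.
Arguments cupp {NC NR}.


Definition wf_cond {NC NR : Type} (c : conditional NC NR) : Prop :=
  (0 <= clow c)%R /\ (clow c <= cupp c)%R /\ (cupp c <= 1)%R.

Definition sat_cond {NC NR : Type} (I : interp NC NR) (c : conditional NC NR) : Prop :=
  card_c I (cprem c) = 0%N \/
  ((clow c <= cratio I (ccon c) (cprem c))%R /\ (cratio I (ccon c) (cprem c) <= cupp c)%R).

Definition kb (NC NR : Type) := seq (conditional NC NR).

Definition wf_kb {NC NR : Type} (K : kb NC NR) : Prop :=
  forall c, Stdlib.Lists.List.In c K -> wf_cond c.

Definition is_model {NC NR : Type} (K : kb NC NR) (I : interp NC NR) : Prop :=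
  forall c, Stdlib.Lists.List.In c K -> sat_cond I c.

(* The disjoint union of m copies of I0 and n copies of I1 counts every
   concept as m [X]^I0 + n [X]^I1.  Each conditional (X | P)[l, u] says
   l [P] <= [X ⊓ P] <= u [P], a pair of linear inequalities, so it survives
   nonnegative combinations: the union is again a model of K.  Taking
   m = [D]^I1 and n = [D]^I0 makes the ratio of C given D the average of
   r0 and r1. *)
From HB Require Import structures.
From mathcomp Require Import all_boot all_order all_algebra.
From mathcomp Require Import ring.
Import Order.TTheory GRing.Theory Num.Theory.

Section UnionInterp.
Context {NC NR : Type}.
Variables (I0 I1 : interp NC NR) (m n : nat).
Hypothesis m_gt0 : (0 < m)%N.

Definition union_dom : finType := ('I_m * dom I0 + 'I_n * dom I1)%type.

Lemma union_dom_nonempty : (0 < #|union_dom|)%N.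
Proof.
rewrite card_sum !card_prod card_ord ltn_addr // muln_gt0 m_gt0.
exact: dom_nonempty.
Qed.

Definition union_interp : interp NC NR :=
  @Interp NC NR union_dom union_dom_nonempty
    (fun A u => match u with inl (_, x) => cint I0 A x | inr (_, x) => cint I1 A x end)
    (fun r u v => match u, v with
                  | inl (i, x), inl (j, y) => (i == j) && rint I0 r x y
                  | inr (i, x), inr (j, y) => (i == j) && rint I1 r x y
                  | _, _ => false end).

Lemma csem_union_inl C i x : csem union_interp C (inl (i, x)) = csem I0 C x.
Proof.
elim: C i x => [|A|C IH|C1 IH1 C2 IH2|r C IH] i x //=; rewrite ?IH ?IH1 ?IH2 //.
apply/existsP/existsP => [[[[j y]|[j y]]] //= /andP[/andP[_ rxy] Cy]|[y /andP[rxy Cy]]].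
- by exists y; rewrite rxy -(IH j).
- by exists (inl (i, y)); rewrite /= eqxx rxy IH.
Qed.

Lemma csem_union_inr C i x : csem union_interp C (inr (i, x)) = csem I1 C x.
Proof.
elim: C i x => [|A|C IH|C1 IH1 C2 IH2|r C IH] i x //=; rewrite ?IH ?IH1 ?IH2 //.
apply/existsP/existsP => [[[[j y]|[j y]]] //= /andP[/andP[_ rxy] Cy]|[y /andP[rxy Cy]]].
- by exists y; rewrite rxy -(IH j).
- by exists (inr (i, y)); rewrite /= eqxx rxy IH.
Qed.

Lemma card_copies (T : finType) k (q : pred T) :
  \sum_(p : 'I_k * T | q p.2) 1 = k * #|q|.
Proof.
rewrite (eq_bigl (fun p : 'I_k * T => xpredT p.1 && q p.2)) //.
rewrite -(pair_big xpredT q (fun _ _ => 1)) /=.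
under eq_bigr do rewrite sum1_card.
by rewrite sum_nat_const card_ord.
Qed.

Lemma card_c_union C : card_c union_interp C = m * card_c I0 C + n * card_c I1 C.
Proof.
rewrite /card_c -sum1_card big_sumType /=.
rewrite (eq_bigl (fun p : 'I_m * dom I0 => csem I0 C p.2)); last first.
  by case=> i x; rewrite !inE csem_union_inl.
rewrite (eq_bigl (fun p : 'I_n * dom I1 => csem I1 C p.2)); last first.
  by case=> i x; rewrite !inE csem_union_inr.
by rewrite !card_copies.
Qed.

End UnionInterp.

Lemma card_c_and_le {NC NR : Type} (I : interp NC NR) X P :
  (card_c I (CAnd X P) <= card_c I P)%N.
Proof. by apply/subset_leq_card/subsetP => x; rewrite !inE => /andP[]. Qed.

Lemma sat_condE {NC NR : Type} (I : interp NC NR) (c : conditional NC NR) :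
  sat_cond I c <->
  (clow c * (card_c I (cprem c))%:R <= (card_c I (CAnd (ccon c) (cprem c)))%:R)%R /\
  ((card_c I (CAnd (ccon c) (cprem c)))%:R <= cupp c * (card_c I (cprem c))%:R)%R.
Proof.
have le_and := card_c_and_le I (ccon c) (cprem c).
have [P0|P_gt0] := posnP (card_c I (cprem c)).
  move: le_and; rewrite P0 leqn0 => /eqP ->; rewrite !mulr0.
  by split=> [_|_]; [split|left].
have P_gt0' : (0 < (card_c I (cprem c))%:R :> rat)%R by rewrite ltr0n.
rewrite /sat_cond /cratio ler_pdivlMr // ler_pdivrMr //.
by split=> [[P0|//]|]; [rewrite P0 in P_gt0|right].
Qed.

Lemma is_model_union {NC NR : Type} (K : kb NC NR) (I0 I1 : interp NC NR) m n
    (m_gt0 : (0 < m)%N) :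
  is_model K I0 -> is_model K I1 -> is_model K (union_interp I0 I1 m n m_gt0).
Proof.
move=> M0 M1 c Kc; have [l0 u0] := sat_condE I0 c; have [l1 u1] := sat_condE I1 c.
have [lo0 up0] := l0 (M0 c Kc); have [lo1 up1] := l1 (M1 c Kc).
apply/sat_condE; rewrite !card_c_union !natrD !natrM.
have m_ge0 : (0 <= m%:R :> rat)%R by rewrite ler0n.
have n_ge0 : (0 <= n%:R :> rat)%R by rewrite ler0n.
rewrite !mulrDr !mulrA ![(_ * m%:R)%R]mulrC ![(_ * n%:R)%R]mulrC -!mulrA.
by split; apply: lerD; apply: ler_wpM2l.
Qed.

Lemma cratio_union_mid {NC NR : Type} (I0 I1 : interp NC NR) (C D : concept NC NR)
    (D1_gt0 : (0 < card_c I1 D)%N) :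
  (0 < card_c I0 D)%N ->
  cratio (union_interp I0 I1 (card_c I1 D) (card_c I0 D) D1_gt0) C D =
  ((cratio I0 C D + cratio I1 C D) / 2%:R)%R.
Proof.
move=> D0_gt0; rewrite /cratio !card_c_union !natrD !natrM.
have D0_neq0 : ((card_c I0 D)%:R != 0 :> rat)%R by rewrite pnatr_eq0 -lt0n.
have D1_neq0 : ((card_c I1 D)%:R != 0 :> rat)%R by rewrite pnatr_eq0 -lt0n.
field.
by rewrite D0_neq0 D1_neq0 -!natrM -natrD pnatr_eq0 -lt0n addn_gt0 muln_gt0 D1_gt0 D0_gt0.
Qed.

Theorem mainTheorem3 (NC NR : Type) (K : kb NC NR) (C D : concept NC NR)
  (I0 I1 : interp NC NR) :
  wf_kb K ->
  is_model K I0 -> is_model K I1 ->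
  (0 < card_c I0 D)%N -> (0 < card_c I1 D)%N ->
  (cratio I0 C D < cratio I1 C D)%R ->
  exists I : interp NC NR,
    is_model K I /\ (0 < card_c I D)%N /\
    cratio I C D = ((cratio I0 C D + cratio I1 C D) / 2%:R)%R.
Proof.
move=> _ M0 M1 D0_gt0 D1_gt0 _.
exists (union_interp I0 I1 (card_c I1 D) (card_c I0 D) D1_gt0); split; [|split].
- exact: is_model_union.
- by rewrite card_c_union addn_gt0 muln_gt0 D1_gt0 D0_gt0.
- exact: cratio_union_mid.
Qed.
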